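(* For every $m\geqslant1$ and $n\geqslant1$, $$\mathcal{F}_m(n)=\prod_{p^\alpha\| n}\left(f_{m-1}(\alpha)-f_{m-1}(\alpha-1)\right),$$ $|\mathcal{F}_m(n)|\leqslant1$, and if $\mathcal{F}_m(n)\neq0$ then every prime $p$ dividing $n$ divides $n$ to exponent at least $2\uparrow\uparrow m$.
   Context: $H(n)$ is the height of the factorization tree of $n\geqslant1$: $H(1)=0$ and, for $n=p_1^{\alpha_1}\cdots p_k^{\alpha_k}>1$ with distinct primes $p_i$, $H(n)=1+\max_i H(\alpha_i)$. For $m\geqslant0$ and $n\geqslant1$, $f_m(n)=1$ if $H(n)\leqslant m$ and $0$ otherwise; in addition, by convention $f_m(0)=1$ for all $m\geqslant 0$ (so $f_0(\alpha)=1$ iff $\alpha\in\{0,1\}$). $\mathcal{F}_m$ is defined by $f_m(n)=\sum_{d\mid n}\mathcal{F}_m(d)$ for all $n\geqslant1$. Tetration: $a\uparrow\uparrow0=1$, $a\uparrow\uparrow b=a^{a\uparrow\uparrow(b-1)}$. The product is over prime powers exactly dividing $n$ (empty product $=1$). *)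

From mathcomp Require Import all_boot all_order all_algebra.
Set Implicit Arguments. Unset Strict Implicit. Unset Printing Implicit Defensive.
Import Order.TTheory GRing.Theory Num.Theory.

(* Height of the factorization tree, computed with fuel k.
   H(1) = 0 and H(n) = 1 + max_{p | n} H(logn p n) for n > 1.
   Since every exponent alpha of n satisfies alpha < n, fuel n suffices. *)
Fixpoint Hfuel (k n : nat) : nat :=
  match k with
  | 0 => 0
  | k'.+1 => if n <= 1 then 0
             else (\max_(p <- primes n) Hfuel k' (logn p n)).+1
  end.

Definition H (n : nat) : nat := Hfuel n n.

Definition f (m n : nat) : int :=
  if n == 0 then 1%R else if H n <= m then 1%R else 0%R.

Fixpoint tet (a b : nat) : nat :=
  match b with
  | 0 => 1
  | b'.+1 => a ^ tet a b'
  end.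

From mathcomp Require Import all_boot all_order all_algebra.
From mathcomp Require Import zify.
Set Implicit Arguments. Unset Strict Implicit. Unset Printing Implicit Defensive.
Import Order.TTheory GRing.Theory Num.Theory.

(* Since H(n) <= m iff H(alpha) <= m - 1 for every exponent alpha of n, f_m is
   the multiplicative function with f_m(p^alpha) = f_(m-1)(alpha).  The divisor
   sums of a multiplicative function G are multiplicative, with value
   G(1) + ... + G(p^alpha) at p^alpha; hence the multiplicative function with
   value f_(m-1)(alpha) - f_(m-1)(alpha - 1) at p^alpha has telescoping divisor
   sums equal to f_m, and it is F_m by uniqueness of Moebius inversion.  Each
   factor is a difference of two values in {0, 1}.  Finally every j < 2^^m has
   H(j) <= m - 1, because its exponents are < 2^^(m-1); so f_(m-1) is 1 on
   [0, 2^^m) and the factor at p vanishes when p divides n to an exponent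
   below 2^^m. *)

Lemma Hfuel_stable k1 k2 n :
  (n <= k1)%N -> (n <= k2)%N -> Hfuel k1 n = Hfuel k2 n.
Proof.
elim: k1 k2 n => [|k1 IH] [|k2] n /=.
- by [].
- by rewrite leqn0 => /eqP -> _.
- by move=> _; rewrite leqn0 => /eqP ->.
move=> le_n_k1 le_n_k2; case: leqP => // n_gt1; congr _.+1.
apply: eq_big_seq => p _; apply: IH; have := ltn_logl p (ltnW n_gt1); lia.
Qed.

Lemma HE n :
  H n = if (n <= 1)%N then 0%N else (\max_(p <- primes n) H (logn p n)).+1.
Proof.
rewrite /H; case: n => [|n] //=; case: ifP => // _; congr _.+1.
apply: eq_big_seq => p _; apply: Hfuel_stable => //.
have := ltn_logl p (isT : (0 < n.+1)%N); lia.
Qed.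

Lemma H_le_succ k n :
  (H n <= k.+1)%N = all (fun p => H (logn p n) <= k)%N (primes n).
Proof.
rewrite HE; case: (leqP n 1) => [n_le1 | _].
  by move: n_le1; case: n => [|[|]].
rewrite ltnS; elim: (primes n) => [|p s IHs]; first by rewrite big_nil.
by rewrite big_cons geq_max IHs.
Qed.

Lemma H_lt_tet k j : (0 < j)%N -> (j < tet 2 k.+1)%N -> (H j <= k)%N.
Proof.
elim: k j => [|k IH] j j_gt0 lt_j_tet.
  by move: lt_j_tet j_gt0; rewrite /= expn1; case: j => [|[|]].
rewrite H_le_succ; apply/allP => q q_j.
have q_pr : prime q by move: q_j; rewrite mem_primes => /andP[].
have log_gt0 : (0 < logn q j)%N by rewrite logn_gt0.
apply: IH => //; rewrite -(@ltn_exp2l 2) //; apply: leq_ltn_trans lt_j_tet.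
apply: (@leq_trans (q ^ logn q j)); first by rewrite leq_exp2r // prime_gt1.
exact: dvdn_leq j_gt0 (pfactor_dvdnn q j).
Qed.

Local Open Scope ring_scope.

Lemma f_gt0E k n : (0 < n)%N -> f k n = if (H n <= k)%N then 1 else 0.
Proof. by rewrite /f; case: n. Qed.

Lemma f_lt_tet k j : (j < tet 2 k.+1)%N -> f k j = 1.
Proof. by rewrite /f; case: j => [|j] //= lt_j_tet; rewrite H_lt_tet. Qed.

Lemma norm_f_sub_le1 k a b : `|f k a - f k b| <= 1.
Proof. by rewrite /f; repeat case: ifP. Qed.

Lemma logn_pfactorM p i e :
  prime p -> ~~ (p %| e)%N -> (0 < e)%N -> logn p (p ^ i * e) = i.
Proof.
move=> p_pr p_ndvd_e e_gt0.
have pi_gt0 : (0 < p ^ i)%N by rewrite expn_gt0 prime_gt0.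
rewrite lognM // pfactorK //.
by rewrite logn_coprime ?prime_coprime // addn0.
Qed.

Lemma divisor_ndvdn p r e :
  ~~ (p %| r)%N -> e \in divisors r -> ~~ (p %| e)%N /\ (0 < e)%N.
Proof.
move=> p_ndvd_r; have r_gt0 : (0 < r)%N by case: r p_ndvd_r; rewrite ?dvdn0.
rewrite -dvdn_divisors // => e_dvd_r; split; last exact: dvdn_gt0 e_dvd_r.
by apply: contra p_ndvd_r => /dvdn_trans; apply.
Qed.

Lemma divisors_pfactorM p a r :
  prime p -> (0 < r)%N -> ~~ (p %| r)%N ->
  perm_eq (divisors (p ^ a * r))
          [seq (p ^ i * e)%N | i <- iota 0 a.+1, e <- divisors r].
Proof.
move=> p_pr r_gt0 p_ndvd_r.
have pa_gt0 : (0 < p ^ a)%N by rewrite expn_gt0 prime_gt0.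
have n_gt0 : (0 < p ^ a * r)%N by rewrite muln_gt0 pa_gt0.
apply: uniq_perm; first exact: divisors_uniq.
  apply: allpairs_uniq; [exact: iota_uniq | exact: divisors_uniq |].
  move=> [i1 e1] [i2 e2] /allpairsP[[j1 d1] [_ d1_r [-> ->]]].
  move=> /allpairsP[[j2 d2] [_ d2_r [-> ->]]] /= eq_prod.
  have [p_nd1 d1_gt0] := divisor_ndvdn p_ndvd_r d1_r.
  have [p_nd2 d2_gt0] := divisor_ndvdn p_ndvd_r d2_r.
  have eq_j : j1 = j2.
    by rewrite -(logn_pfactorM j1 p_pr p_nd1 d1_gt0) eq_prod logn_pfactorM.
  move: eq_prod; rewrite eq_j => /eqP.
  by rewrite eqn_pmul2l ?expn_gt0 ?prime_gt0 // => /eqP ->.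
move=> d; rewrite -dvdn_divisors //; apply/idP/allpairsP => [d_dvd_n | ].
  have d_gt0 : (0 < d)%N by apply: dvdn_gt0 d_dvd_n.
  have [e coprime_p_e d_eq] := pfactor_coprime p_pr d_gt0.
  exists (logn p d, e); split; last by rewrite mulnC.
  - rewrite mem_iota add0n ltnS.
    by have := dvdn_leq_log p n_gt0 d_dvd_n; rewrite logn_pfactorM.
  - have e_gt0 : (0 < e)%N by move: d_gt0; rewrite d_eq muln_gt0 => /andP[].
    rewrite -dvdn_divisors // -(@Gauss_dvdr _ (p ^ a)).
      by apply: dvdn_trans d_dvd_n; rewrite d_eq dvdn_mulr.
    by rewrite coprime_sym coprimeXl.
move=> [[i e] [i_le e_r ->]] /=; apply: dvdn_mul; last by rewrite dvdn_divisors.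
by apply: dvdn_exp2l; move: i_le; rewrite mem_iota add0n ltnS.
Qed.

Lemma divisor_sum_inj (V : zmodType) (F G : nat -> V) :
  (forall n, (0 < n)%N ->
     \sum_(d <- divisors n) F d = \sum_(d <- divisors n) G d) ->
  forall n, (0 < n)%N -> F n = G n.
Proof.
move=> eq_sums; elim/ltn_ind => n IH n_gt0.
have := eq_sums n n_gt0; rewrite !(big_rem n (divisors_id n_gt0)) /=.
rewrite (eq_big_seq G); first exact: addIr.
move=> d; rewrite mem_rem_uniq ?divisors_uniq // => /andP[d_neq_n].
rewrite -dvdn_divisors // => d_dvd_n.
apply: IH; last exact: dvdn_gt0 d_dvd_n.
by rewrite ltn_neqAle d_neq_n dvdn_leq.
Qed.

Section MultiplicativeFunctions.
Variable R : comPzRingType.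
Implicit Types phi psi : nat -> R.

(* The multiplicative function with value [phi a] at prime powers [p ^ a]. *)
Definition multf phi n := \prod_(p <- primes n) phi (logn p n).

Lemma eq_multf phi psi :
  (forall a, (0 < a)%N -> phi a = psi a) -> forall n, multf phi n = multf psi n.
Proof.
move=> eq_phi n; apply: eq_big_seq => p p_n.
by apply: eq_phi; rewrite logn_gt0.
Qed.

Lemma multf_pfactorM phi p i e :
  phi 0%N = 1 -> prime p -> ~~ (p %| e)%N -> (0 < e)%N ->
  multf phi (p ^ i * e) = phi i * multf phi e.
Proof.
move=> phi0 p_pr p_ndvd_e e_gt0.
have [-> | i_gt0] := posnP i; first by rewrite phi0 mul1n mul1r.
have pi_gt0 : (0 < p ^ i)%N by rewrite expn_gt0 prime_gt0.
have primes_n : perm_eq (primes (p ^ i * e)) (p :: primes e).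
  apply: uniq_perm; first exact: primes_uniq.
    by rewrite /= primes_uniq andbT mem_primes (negbTE p_ndvd_e) !andbF.
  by move=> q; rewrite primesM // primesX // primes_prime // !in_cons orbF orbC.
rewrite /multf (perm_big _ primes_n) big_cons logn_pfactorM //; congr (_ * _).
apply: eq_big_seq => q; rewrite mem_primes => /and3P[q_pr _ q_dvd_e].
rewrite lognM // lognX logn_prime //.
have -> : (q == p) = false by apply: contraNF p_ndvd_e => /eqP <-.
by rewrite muln0.
Qed.

Lemma sum_divisors_multf phi n :
  phi 0%N = 1 -> (0 < n)%N ->
  \sum_(d <- divisors n) multf phi d = multf (fun a => \sum_(i < a.+1) phi i) n.
Proof.
move=> phi0; elim/ltn_ind: n => n IH n_gt0.
have [n_le1 | n_gt1] := leqP n 1.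
  have -> : n = 1%N by case: n n_gt0 n_le1 {IH} => [|[|]].
  by rewrite big_seq1 /multf !big_nil.
have p_pr := pdiv_prime n_gt1; set p := pdiv n in p_pr.
have [r coprime_p_r n_eq] := pfactor_coprime p_pr n_gt0.
set a := logn p n in n_eq.
have r_gt0 : (0 < r)%N by move: n_gt0; rewrite n_eq muln_gt0 => /andP[].
have p_ndvd_r : ~~ (p %| r)%N by rewrite -prime_coprime.
have r_lt_n : (r < n)%N.
  rewrite n_eq ltn_Pmulr // -(expn0 p) ltn_exp2l ?prime_gt1 // logn_gt0.
  by rewrite mem_primes p_pr n_gt0 pdiv_dvd.
rewrite n_eq mulnC (perm_big _ (divisors_pfactorM a p_pr r_gt0 p_ndvd_r)).
rewrite big_allpairs_dep /= multf_pfactorM ?big_ord1 // -IH // big_distrl /=.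
rewrite -(big_mkord xpredT (fun i => phi i * _)); apply: eq_bigr => i _.
rewrite big_distrr /=; apply: eq_big_seq => e.
by case/(divisor_ndvdn p_ndvd_r); apply: multf_pfactorM.
Qed.

Lemma sum_divisors_multf_diff (g : nat -> R) n :
  g 0%N = 1 -> (0 < n)%N ->
  \sum_(d <- divisors n) multf (fun a => g a - g a.-1) d = multf g n.
Proof.
move=> g0 n_gt0.
pose psi a := if a == 0%N then 1 else g a - g a.-1.
have telescope a : \sum_(i < a.+1) psi i = g a.
  rewrite big_ord_recl /= -(big_mkord xpredT (fun i => g i.+1 - g i)).
  by rewrite telescope_sumr // g0 addrC subrK.
rewrite (eq_bigr (multf psi)); last by move=> d _; apply: eq_multf => -[].
by rewrite sum_divisors_multf //; apply: eq_multf => a _; rewrite telescope.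
Qed.

End MultiplicativeFunctions.

Lemma norm_multf_le1 (R : numDomainType) (phi : nat -> R) n :
  (forall a, `|phi a| <= 1) -> `|multf phi n| <= 1.
Proof.
move=> phi_le1; rewrite normr_prod; apply: prodr_ile1 => p _.
by rewrite normr_ge0 phi_le1.
Qed.

Lemma multf_eq0 (R : comPzRingType) (phi : nat -> R) n p :
  p \in primes n -> phi (logn p n) = 0 -> multf phi n = 0.
Proof. by move=> p_n phi_eq0; rewrite /multf (big_rem p) //= phi_eq0 mul0r. Qed.

Lemma f_multf k n : (0 < n)%N -> f k.+1 n = multf (f k) n.
Proof.
move=> n_gt0; rewrite f_gt0E // H_le_succ /multf.
pose indicator p : int := if (H (logn p n) <= k)%N then 1 else 0.
rewrite (eq_big_seq indicator); last first.
  by move=> p p_n; rewrite f_gt0E // logn_gt0.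
elim: (primes n) => [|p s IHs]; first by rewrite big_nil.
by rewrite big_cons /= -IHs /indicator; case: (H _ <= k)%N; rewrite ?mul1r ?mul0r.
Qed.

Theorem lemma1 (m : nat) (hm : (1 <= m)%N) (F : nat -> int)
  (hF : forall n : nat, (0 < n)%N -> f m n = \sum_(d <- divisors n) F d) :
  forall n : nat, (0 < n)%N ->
    [/\ F n = \prod_(p <- primes n)
                (f m.-1 (logn p n) - f m.-1 (logn p n).-1),
        `|F n| <= 1
      & F n != 0 -> forall p : nat, prime p -> (p %| n)%N ->
          (tet 2 m <= logn p n)%N].
Proof.
move=> n n_gt0; have m_eq : m = m.-1.+1 by case: m hm {hF}.
have F_eq : F n = multf (fun a => f m.-1 a - f m.-1 a.-1) n.
  apply: (divisor_sum_inj _ n_gt0) => j j_gt0.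
  by rewrite -hF // sum_divisors_multf_diff // m_eq f_multf.
split=> //.
- by rewrite F_eq norm_multf_le1 // => a; apply: norm_f_sub_le1.
move=> Fn_neq0 p p_pr p_dvd_n; rewrite leqNgt; apply: contra Fn_neq0 => lt_log.
rewrite m_eq in lt_log.
rewrite F_eq (multf_eq0 (p := p)) ?mem_primes ?p_pr ?n_gt0 //.
by rewrite !f_lt_tet ?subrr // (leq_ltn_trans (leq_pred _)).
Qed.
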